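(* Let $\Lambda$ be a row-finite, cofinal $k$-graph with no sources and $R$ a commutative ring with $1$. Let $a$ be a nonzero element of the center $Z(\mathrm{KP}_R(\Lambda))$, written in normal form $a=\sum_{(\alpha,\beta)\in F}r_{\alpha,\beta}s_\alpha s_{\beta^*}$. Then $\{v\in\Lambda^0: v=r(\beta)\text{ for some }(\alpha,\beta)\in F\}=\Lambda^0$.
   Context: A $k$-graph is a countable category $\Lambda$ with a functor $d:\Lambda\to\mathbb{N}^k$ ($\mathbb{N}^k$ a one-object category under addition) with unique factorization: whenever $d(\lambda)=m+n$ there are unique $\mu,\nu$ with $d(\mu)=m,d(\nu)=n,\lambda=\mu\nu$. $\Lambda^0$ = vertices (degree-$0$ morphisms), $\Lambda^n=d^{-1}(n)$, $r,s$ range and source, $v\Lambda^n=\{\lambda\in\Lambda^n:r(\lambda)=v\}$. Row-finite: $v\Lambda^n$ finite; no sources: $v\Lambda^n\ne\emptyset$. An infinite path is a degree-preserving functor $x$ from $\Omega_k$ (objects $\mathbb{N}^k$, morphisms $(m,n)$ with $m\le n$, $r(m,n)=m$, $s(m,n)=n$, $d(m,n)=n-m$) to $\Lambda$; $x(m):=x(m,m)$. Cofinal: for every infinite path $x$ and vertex $v$ there are $m$ and a path $\lambda$ with $r(\lambda)=v$, $s(\lambda)=x(m)$. Kumjian-Pask $\Lambda$-family in an $R$-algebra $A$: $P:\Lambda^0\to A$, $S:\Lambda^{\ne0}\cup\{\lambda^*:\lambda\in\Lambda^{\neq0}\}\to A$ with (KP1) $P_v$ mutually orthogonal idempotents; (KP2)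 for $r(\mu)=s(\lambda)$: $S_\lambda S_\mu=S_{\lambda\mu}$, $S_{\mu^*}S_{\lambda^*}=S_{(\lambda\mu)^*}$, $P_{r(\lambda)}S_\lambda=S_\lambda=S_\lambda P_{s(\lambda)}$, $P_{s(\lambda)}S_{\lambda^*}=S_{\lambda^*}=S_{\lambda^*}P_{r(\lambda)}$; (KP3) $S_{\lambda^*}S_\mu=\delta_{\lambda,\mu}P_{s(\lambda)}$ when $d(\lambda)=d(\mu)$; (KP4) $P_v=\sum_{\lambda\in v\Lambda^n}S_\lambda S_{\lambda^*}$ for $n\ne0$. $\mathrm{KP}_R(\Lambda)$ is the $R$-algebra generated by a universal such family $(p,s)$; $s_v=s_{v^*}=p_v$ for vertices $v$. Normal form: $a=\sum_{(\alpha,\beta)\in F}r_{\alpha,\beta}s_\alpha s_{\beta^*}$ with $F\subset\Lambda\times\Lambda^m$ finite for some $m\in\mathbb{N}^k$, all $r_{\alpha,\beta}\in R\setminus\{0\}$, and $s(\alpha)=s(\beta)$ for all $(\alpha,\beta)\in F$. *)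

From HB Require Import structures.
From mathcomp Require Import all_boot all_order all_algebra.
Set Implicit Arguments. Unset Strict Implicit. Unset Printing Implicit Defensive.
Import GRing.Theory.
Local Open Scope ring_scope.

Definition deg_t (k : nat) := {ffun 'I_k -> nat}.
Definition deg0 (k : nat) : deg_t k := [ffun _ => 0%N].
Definition degadd (k : nat) (m n : deg_t k) : deg_t k := [ffun i => (m i + n i)%N].
Definition degsub (k : nat) (n m : deg_t k) : deg_t k := [ffun i => (n i - m i)%N].
Definition degle (k : nat) (m n : deg_t k) : Prop := forall i, (m i <= n i)%N.

(** Vertices (= degree-0 morphisms) are identified with objects. *)
Record kgraph (k : nat) := KGraph {
  Obj : countType;
  Mor : countType;
  src : Mor -> Obj;
  rng : Mor -> Obj;
  idm : Obj -> Mor;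
  comp : Mor -> Mor -> Mor;
  deg : Mor -> deg_t k;
  src_idm : forall v, src (idm v) = v;
  rng_idm : forall v, rng (idm v) = v;
  src_comp : forall l m, src l = rng m -> src (comp l m) = src m;
  rng_comp : forall l m, src l = rng m -> rng (comp l m) = rng l;
  comp_idl : forall l, comp (idm (rng l)) l = l;
  comp_idr : forall l, comp l (idm (src l)) = l;
  compA : forall l m n, src l = rng m -> src m = rng n ->
            comp l (comp m n) = comp (comp l m) n;
  deg_idm : forall v, deg (idm v) = deg0 k;
  deg_comp : forall l m, src l = rng m -> deg (comp l m) = degadd (deg l) (deg m);
  unique_fact : forall l (m n : deg_t k), deg l = degadd m n ->
     exists! p : Mor * Mor, [/\ deg p.1 = m, deg p.2 = n, src p.1 = rng p.2
                                & l = comp p.1 p.2]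
}.

Section KGraphProps.
Variables (k : nat) (G : kgraph k).

Definition row_finite : Prop :=
  forall (v : Obj G) (n : deg_t k), exists s : seq (Mor G),
    forall l, rng l = v -> deg l = n -> l \in s.

Definition no_sources : Prop :=
  forall (v : Obj G) (n : deg_t k), exists l : Mor G, rng l = v /\ deg l = n.

(** Infinite path: degree-preserving functor Omega_k -> G, given by its
    values x m n on the morphisms (m,n), m <= n, of Omega_k. *)
Definition inf_path (x : deg_t k -> deg_t k -> Mor G) : Prop :=
  [/\ forall m, x m m = idm (rng (x m m)),
      forall m n, degle m n -> deg (x m n) = degsub n m
    & forall m n p, degle m n -> degle n p ->
        src (x m n) = rng (x n p) /\ comp (x m n) (x n p) = x m p].

Definition cofinal : Prop :=
  forall x, inf_path x -> forall v : Obj G,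
    exists (m : deg_t k) (l : Mor G), rng l = v /\ src l = rng (x m m).

End KGraphProps.

Record nualg (R : comPzRingType) := NUAlg {
  nua_sort :> lmodType R;
  nua_mul : nua_sort -> nua_sort -> nua_sort;
  nua_mulA : forall x y z, nua_mul x (nua_mul y z) = nua_mul (nua_mul x y) z;
  nua_mulDl : forall x y z, nua_mul (x + y) z = nua_mul x z + nua_mul y z;
  nua_mulDr : forall x y z, nua_mul x (y + z) = nua_mul x y + nua_mul x z;
  nua_mulZl : forall (c : R) x y, nua_mul (c *: x) y = c *: nua_mul x y;
  nua_mulZr : forall (c : R) x y, nua_mul x (c *: y) = c *: nua_mul x y
}.

Section KP.
Variables (k : nat) (G : kgraph k) (R : comPzRingType).

Definition nua_hom (A B : nualg R) (f : A -> B) : Prop :=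
  [/\ forall x y, f (x + y) = f x + f y,
      forall (c : R) x, f (c *: x) = c *: f x
    & forall x y, f (nua_mul x y) = nua_mul (f x) (f y)].

(** Kumjian-Pask family (P, S, St) in B.  [S l] is s_l and [St l] is s_{l^*};
    they are total functions on morphisms, with the convention
    s_v = s_{v^*} = p_v on vertices (degree-0 morphisms = identities). *)
Definition KP_family (B : nualg R) (P : Obj G -> B) (S St : Mor G -> B) : Prop :=
  [/\ (forall v, S (idm v) = P v /\ St (idm v) = P v),
      (forall v, nua_mul (P v) (P v) = P v) /\
      (forall v w, v <> w -> nua_mul (P v) (P w) = 0),
      (forall l m, deg l <> deg0 k -> deg m <> deg0 k -> src l = rng m ->
         nua_mul (S l) (S m) = S (comp l m) /\
         nua_mul (St m) (St l) = St (comp l m)) /\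
      (forall l, deg l <> deg0 k ->
         [/\ nua_mul (P (rng l)) (S l) = S l, nua_mul (S l) (P (src l)) = S l,
             nua_mul (P (src l)) (St l) = St l & nua_mul (St l) (P (rng l)) = St l]),
      (forall l m, deg l <> deg0 k -> deg m <> deg0 k -> deg l = deg m ->
         nua_mul (St l) (S m) = if l == m then P (src l) else 0)
    & (* KP4: sum over the finite set v Lambda^n, enumerated by s *)
      (forall v (n : deg_t k) (s : seq (Mor G)), n <> deg0 k -> uniq s ->
         (forall l, l \in s <-> rng l = v /\ deg l = n) ->
         P v = \sum_(l <- s) nua_mul (S l) (St l))].

Definition is_KP_algebra (A : nualg R) (p : Obj G -> A) (s st : Mor G -> A) : Prop :=
  [/\ KP_family p s st,
      (forall Q : A -> Prop, Q 0 -> (forall x y, Q x -> Q y -> Q (x + y)) ->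
         (forall (c : R) x, Q x -> Q (c *: x)) ->
         (forall x y, Q x -> Q y -> Q (nua_mul x y)) ->
         (forall v, Q (p v)) -> (forall l, Q (s l)) -> (forall l, Q (st l)) ->
         forall x, Q x)
    &
      (forall (B : nualg R) (P : Obj G -> B) (S St : Mor G -> B),
         KP_family P S St ->
         exists f : A -> B, [/\ nua_hom f, (forall v, f (p v) = P v),
                               (forall l, f (s l) = S l) & (forall l, f (st l) = St l)])].

Definition normal_form (A : nualg R) (s st : Mor G -> A) (a : A)
    (m : deg_t k) (F : seq (Mor G * Mor G)) (rc : Mor G * Mor G -> R) : Prop :=
  [/\ uniq F,
      (forall ab, ab \in F -> [/\ deg ab.2 = m, src ab.1 = src ab.2 & rc ab <> 0])
    & a = \sum_(ab <- F) rc ab *: nua_mul (s ab.1) (st ab.2)].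

End KP.

(* The vertices [u] with [a p_u = 0] form a hereditary set (p_{s(l)} = s_l^* s_l and a is
   central) which is saturated (by (KP4) in degree (1,...,1)).  In a cofinal k-graph such a
   set is empty or everything: from a vertex outside it one walks along edges of degree
   (1,...,1) that stay outside, obtaining an infinite path, and cofinality connects any
   vertex of the set to that path.  If some vertex v were not the range of any [be] with
   [(al, be)] in F, then a p_v = 0 from the normal form, hence a p_w = 0 for all w, and
   multiplying a by the sum of the p_{r(be)} gives both a and 0. *)

From Stdlib Require Import ClassicalEpsilon Classical.
From Pilot Require Import Defs.
From HB Require Import structures.
From mathcomp Require Import all_boot all_order all_algebra.
Set Implicit Arguments. Unset Strict Implicit. Unset Printing Implicit Defensive.
Import GRing.Theory.

Local Notation kcomp := Defs.comp.

Definition deg_const (k j : nat) : deg_t k := [ffun _ => j].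

Lemma degadd_sub k (a b : deg_t k) : degle a b -> degadd a (degsub b a) = b.
Proof. by move=> le_ab; apply/ffunP=> i; rewrite !ffunE subnKC. Qed.

Lemma degaddKl k (a b : deg_t k) : degsub (degadd a b) a = b.
Proof. by apply/ffunP=> i; rewrite !ffunE addKn. Qed.

Lemma degle_refl k (a : deg_t k) : degle a a.
Proof. by []. Qed.

Definition deg_total k (n : deg_t k) : nat := (\sum_(i < k) n i)%N.

Lemma degle_const_total k (n : deg_t k) : degle n (deg_const k (deg_total n)).
Proof. by move=> i; rewrite ffunE /deg_total (bigD1 i) //= leq_addr. Qed.

Lemma deg_total_mono k (n p : deg_t k) : degle n p -> (deg_total n <= deg_total p)%N.
Proof. by move=> le_np; apply: leq_sum => i _; apply: le_np. Qed.

Section Factorization.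
Variables (k : nat) (G : kgraph k).
Implicit Types (l mu nu : Mor G) (a b c : deg_t k).

Lemma deg0_idm l : deg l = deg0 k -> l = idm (rng l).
Proof.
move=> dl0.
have dl : deg l = degadd (deg0 k) (deg0 k) by rewrite dl0; apply/ffunP=> i; rewrite !ffunE.
have [q [_ uniq_q]] := unique_fact dl.
have q_idl : q = (idm (rng l), l).
  by apply: uniq_q; split; rewrite /= ?deg_idm ?src_idm ?comp_idl.
have q_idr : q = (l, idm (src l)).
  by apply: uniq_q; split; rewrite /= ?deg_idm ?rng_idm ?comp_idr.
by rewrite q_idl in q_idr; case: q_idr.
Qed.

Definition factorization l a (q : Mor G * Mor G) : Prop :=
  [/\ deg q.1 = a, deg q.2 = degsub (deg l) a, src q.1 = rng q.2 & l = kcomp q.1 q.2].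

(* For [degle a (deg l)], the unique factorization [l = l(0,a) l(a,d(l))];
   an arbitrary pair otherwise. *)
Definition factor l a : Mor G * Mor G := epsilon (inhabits (l, l)) (factorization l a).

Lemma factorP l a : degle a (deg l) -> factorization l a (factor l a).
Proof.
move=> le_al; apply: epsilon_spec.
by have [q [fq _]] := unique_fact (esym (degadd_sub le_al)); exists q.
Qed.

Lemma factorE l mu nu a :
  l = kcomp mu nu -> src mu = rng nu -> deg mu = a -> factor l a = (mu, nu).
Proof.
move=> def_l s_mu d_mu.
have dl : deg l = degadd (deg mu) (deg nu) by rewrite def_l deg_comp.
have [q [_ uniq_q]] := unique_fact dl.
have le_al : degle a (deg l) by move=> i; rewrite dl -d_mu ffunE leq_addr.
have [d1 d2 s12 e12] := factorP le_al.
rewrite -(uniq_q (mu, nu)); last by split.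
apply/esym/uniq_q; split=> //; first by rewrite d1.
by rewrite d2 dl -d_mu degaddKl.
Qed.

Lemma factor_comp mu nu a : src mu = rng nu -> degle a (deg mu) ->
  factor (kcomp mu nu) a = ((factor mu a).1, kcomp (factor mu a).2 nu).
Proof.
move=> s_mu le_a; have [d1 _ s12 def_mu] := factorP le_a.
have s2 : src (factor mu a).2 = rng nu by rewrite -s_mu {2}def_mu src_comp.
by apply: factorE; rewrite /= ?rng_comp //; rewrite {1}def_mu -Defs.compA.
Qed.

Lemma src_factor2 l a : degle a (deg l) -> src (factor l a).2 = src l.
Proof. by move=> le_a; have [_ _ s12 def_l] := factorP le_a; rewrite {2}def_l src_comp. Qed.

Lemma deg_factor1 l a : degle a (deg l) -> deg (factor l a).1 = a.
Proof. by case/factorP. Qed.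

Lemma factor1_factor1 l a b : degle a b -> degle b (deg l) ->
  (factor (factor l b).1 a).1 = (factor l a).1.
Proof.
move=> le_ab le_b; have [d1 _ s12 def_l] := factorP le_b.
by rewrite {2}def_l factor_comp // d1.
Qed.

(* The segment [l(a,b)] of [l] between degrees [a <= b <= d(l)]. *)
Definition segment l a b : Mor G := (factor (factor l b).1 a).2.

Lemma deg_segment l a b : degle a b -> degle b (deg l) ->
  deg (segment l a b) = degsub b a.
Proof.
move=> le_ab le_b; have d1 := deg_factor1 le_b.
have le_a1 : degle a (deg (factor l b).1) by rewrite d1.
by have [_ -> _ _] := factorP le_a1; rewrite d1.
Qed.

Lemma segment_comp l a b c : degle a b -> degle b c -> degle c (deg l) ->
  src (segment l a b) = rng (segment l b c) /\
  kcomp (segment l a b) (segment l b c) = segment l a c.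
Proof.
move=> le_ab le_bc le_c; rewrite /segment -(factor1_factor1 le_bc le_c).
set mu := (factor l c).1.
have le_b : degle b (deg mu) by rewrite deg_factor1.
have [d1 _ s12 def_mu] := factorP le_b.
have -> : (factor mu a).2 = kcomp (factor (factor mu b).1 a).2 (factor mu b).2.
  by rewrite {1}def_mu factor_comp ?d1.
by rewrite src_factor2 ?d1.
Qed.

Lemma segment_compr l nu a b : src l = rng nu -> degle b (deg l) ->
  segment (kcomp l nu) a b = segment l a b.
Proof. by move=> s_l le_b; rewrite /segment factor_comp. Qed.

Lemma segment_reaches_src l a : degle a (deg l) ->
  exists2 t : Mor G, rng t = rng (segment l a a) & src t = src l.
Proof.
move=> le_a; have [_ _ s12 _] := factorP le_a.
have s_aa : src (segment l a a) = rng (factor l a).2 by rewrite src_factor2 ?deg_factor1.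
exists (kcomp (segment l a a) (factor l a).2); first by rewrite rng_comp.
by rewrite src_comp // src_factor2.
Qed.

End Factorization.

Section ChainPath.
Variables (k : nat) (G : kgraph k) (P : Obj G -> Prop) (next : Obj G -> Mor G).
Hypothesis next_spec : forall u, P u ->
  [/\ rng (next u) = u, deg (next u) = deg_const k 1 & P (src (next u))].
Variables (w0 : Obj G) (P_w0 : P w0).

Fixpoint chain (j : nat) : Mor G :=
  if j is j'.+1 then kcomp (chain j') (next (src (chain j'))) else idm w0.

Lemma chain_spec j : P (src (chain j)) /\ deg (chain j) = deg_const k j.
Proof.
elim: j => [|j [P_j d_j]] /=.
  by rewrite src_idm deg_idm; split=> //; apply/ffunP=> i; rewrite !ffunE.
have [r_n d_n P_n] := next_spec P_j.
rewrite src_comp ?r_n // deg_comp ?r_n // d_j d_n; split=> //.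
by apply/ffunP=> i; rewrite !ffunE addn1.
Qed.

Lemma chain_extends j d :
  exists2 t, src (chain j) = rng t & chain (j + d) = kcomp (chain j) t.
Proof.
elim: d => [|d [t s_j def_jd]].
  by exists (idm (src (chain j))); rewrite ?rng_idm // addn0 comp_idr.
have [r_n _ _] := next_spec (chain_spec (j + d)).1.
have s_t : src t = rng (next (src (chain (j + d)))) by rewrite r_n def_jd src_comp.
exists (kcomp t (next (src (chain (j + d))))); first by rewrite rng_comp.
by rewrite addnS /= Defs.compA // -def_jd.
Qed.

(* [x(m,n)] is read off the finite path [chain j] for any [j] with [n <= (j,...,j)];
   the choice of [j] does not matter by [segment_compr]. *)
Definition chain_path (m n : deg_t k) : Mor G := segment (chain (deg_total n)) m n.

Lemma degle_chain n : degle n (deg (chain (deg_total n))).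
Proof. by rewrite (chain_spec _).2; apply: degle_const_total. Qed.

Lemma inf_path_chain_path : inf_path chain_path.
Proof.
split.
- move=> m; apply: deg0_idm; rewrite (deg_segment (degle_refl m) (degle_chain m)).
  by apply/ffunP=> i; rewrite !ffunE subnn.
- by move=> m n le_mn; rewrite /chain_path (deg_segment le_mn (degle_chain n)).
- move=> m n q le_mn le_nq.
  have [t s_n def_q] := chain_extends (deg_total n) (deg_total q - deg_total n).
  rewrite subnKC ?deg_total_mono // in def_q.
  rewrite /chain_path -[segment _ m n](segment_compr m s_n (degle_chain n)) -def_q.
  by apply: segment_comp => //; apply: degle_chain.
Qed.

Lemma chain_path_reaches m : exists2 t, rng t = rng (chain_path m m) & P (src t).
Proof.
have [t r_t s_t] := segment_reaches_src (degle_chain m).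
by exists t; rewrite // s_t; apply: (chain_spec _).1.
Qed.

End ChainPath.

Section HereditarySaturated.
Variables (k : nat) (G : kgraph k) (H : Obj G -> Prop).

Definition hereditary : Prop := forall l : Mor G, H (rng l) -> H (src l).

Definition saturated : Prop := forall u,
  (forall l : Mor G, rng l = u -> deg l = deg_const k 1 -> H (src l)) -> H u.

Lemma cofinal_hereditary_saturated : cofinal G -> hereditary -> saturated ->
  forall v w, H v -> H w.
Proof.
move=> cof her sat v w H_v; apply: NNPP => nH_w.
pose outside_step u l := [/\ rng l = u, deg l = deg_const k 1 & ~ H (src l)].
have step u : ~ H u -> exists l, outside_step u l.
  move=> nH_u; apply: NNPP => no_step; apply/nH_u/sat => l r_l d_l.
  by apply: NNPP => nH_l; apply: no_step; exists l.
pose next u := epsilon (inhabits (idm u)) (outside_step u).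
have next_spec u : ~ H u -> outside_step u (next u).
  by move/step; apply: epsilon_spec.
have [m [l [r_l s_l]]] := cof _ (inf_path_chain_path next_spec nH_w) v.
have [t r_t nH_t] := chain_path_reaches next_spec nH_w m.
have s_lt : src l = rng t by rewrite s_l r_t.
by apply: nH_t; have := her (kcomp l t); rewrite src_comp // rng_comp // r_l; apply.
Qed.

End HereditarySaturated.

Lemma row_finite_enum k (G : kgraph k) : row_finite G ->
  forall (v : Obj G) (n : deg_t k), exists2 s : seq (Mor G),
    uniq s & forall l, l \in s <-> rng l = v /\ deg l = n.
Proof.
move=> rf v n; have [s0 s0P] := rf v n.
exists (undup [seq l <- s0 | (rng l == v) && (deg l == n)]); first exact: undup_uniq.
move=> l; rewrite mem_undup mem_filter; split; first by case/andP=> /andP[/eqP-> /eqP->].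
by case=> r_l d_l; rewrite r_l d_l !eqxx s0P.
Qed.

Local Open Scope ring_scope.

Section NUAlgebra.
Variables (R : comPzRingType) (A : nualg R).
Implicit Types x : A.

Lemma nua_mulr0 x : nua_mul x 0 = 0.
Proof. by have := nua_mulZr 0 x 0; rewrite !scale0r. Qed.

Lemma nua_mul0r x : nua_mul 0 x = 0.
Proof. by have := nua_mulZl 0 0 x; rewrite !scale0r. Qed.

Lemma nua_mulr_sumr (I : Type) (r : seq I) (F : I -> A) x :
  nua_mul x (\sum_(i <- r) F i) = \sum_(i <- r) nua_mul x (F i).
Proof.
elim: r => [|i r IHr]; first by rewrite !big_nil nua_mulr0.
by rewrite !big_cons nua_mulDr IHr.
Qed.

Lemma nua_mulr_suml (I : Type) (r : seq I) (F : I -> A) x :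
  nua_mul (\sum_(i <- r) F i) x = \sum_(i <- r) nua_mul (F i) x.
Proof.
elim: r => [|i r IHr]; first by rewrite !big_nil nua_mul0r.
by rewrite !big_cons nua_mulDl IHr.
Qed.

End NUAlgebra.

Section KPFamily.
Variables (k : nat) (G : kgraph k) (R : comPzRingType) (B : nualg R).
Variables (P : Obj G -> B) (S St : Mor G -> B).
Hypothesis famP : KP_family P S St.

Lemma KP_P_idem v : nua_mul (P v) (P v) = P v.
Proof. by case: famP => _ []. Qed.

Lemma KP_St_mulP_rng l : nua_mul (St l) (P (rng l)) = St l.
Proof.
case: famP => S_idm _ [_ KP2] _ _.
have [d0 | /KP2[//]] := deg l =P deg0 k.
by rewrite (deg0_idm d0) (S_idm _).2 rng_idm KP_P_idem.
Qed.

Lemma KP_St_mulP l w : nua_mul (St l) (P w) = if rng l == w then St l else 0.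
Proof.
case: (rng l =P w) => [<- | neq_w]; first exact: KP_St_mulP_rng.
case: famP => _ [_ P_orth] _ _ _.
by rewrite -KP_St_mulP_rng -nua_mulA P_orth ?nua_mulr0.
Qed.

Lemma KP_S_mulP_src l : nua_mul (S l) (P (src l)) = S l.
Proof.
case: famP => S_idm _ [_ KP2] _ _.
have [d0 | /KP2[//]] := deg l =P deg0 k.
by rewrite (deg0_idm d0) (S_idm _).1 src_idm KP_P_idem.
Qed.

Lemma KP_P_src l : P (src l) = nua_mul (St l) (S l).
Proof.
case: famP => S_idm _ _ KP3 _.
have [d0 | dn0] := deg l =P deg0 k.
  by rewrite (deg0_idm d0) (S_idm _).1 (S_idm _).2 src_idm KP_P_idem.
by rewrite KP3 ?eqxx.
Qed.

Lemma KP_P_sum_ones : (0 < k)%N -> row_finite G -> forall u,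
  exists2 s : seq (Mor G), (forall l, l \in s -> rng l = u /\ deg l = deg_const k 1)
    & P u = \sum_(l <- s) nua_mul (S l) (St l).
Proof.
case: famP => _ _ _ _ KP4 k_gt0 rf u.
have ones_neq0 : deg_const k 1 <> deg0 k.
  by move/ffunP/(_ (Ordinal k_gt0)); rewrite !ffunE.
have [s uniq_s sP] := row_finite_enum rf u (deg_const k 1).
by exists s; [move=> l /sP | exact: KP4 ones_neq0 uniq_s sP].
Qed.

Lemma KP_term_mulP al be w :
  nua_mul (nua_mul (S al) (St be)) (P w) =
  if rng be == w then nua_mul (S al) (St be) else 0.
Proof. by rewrite -nua_mulA KP_St_mulP; case: ifP; rewrite ?nua_mulr0. Qed.

Section NormalForm.
Variables (F : seq (Mor G * Mor G)) (rc : Mor G * Mor G -> R).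
Let nf := \sum_(ab <- F) rc ab *: nua_mul (S ab.1) (St ab.2).

Lemma KP_normal_form_mulP_eq0 w :
  (forall ab, ab \in F -> rng ab.2 != w) -> nua_mul nf (P w) = 0.
Proof.
move=> F_w; rewrite nua_mulr_suml; apply: big1_seq => ab /andP[_ ab_F].
by rewrite nua_mulZl KP_term_mulP (negbTE (F_w ab ab_F)) scaler0.
Qed.

Lemma KP_normal_form_mul_sumP (W : seq (Obj G)) : uniq W ->
  {subset [seq rng ab.2 | ab <- F] <= W} ->
  nua_mul nf (\sum_(w <- W) P w) = nf.
Proof.
move=> uniq_W sub_W; rewrite nua_mulr_suml; apply: eq_big_seq => ab ab_F.
have r_W : rng ab.2 \in W by apply/sub_W/map_f.
rewrite nua_mulZl nua_mulr_sumr (bigD1_seq _ r_W uniq_W) /= KP_term_mulP eqxx.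
rewrite big1 ?addr0 // => w w_neq.
by rewrite KP_term_mulP eq_sym (negbTE w_neq).
Qed.

End NormalForm.

Section Central.
Variable a : B.
Hypothesis a_central : forall b, nua_mul a b = nua_mul b a.

Lemma central_annihilated_hereditary : hereditary (fun u => nua_mul a (P u) = 0).
Proof.
move=> l a_rng; rewrite KP_P_src nua_mulA a_central.
rewrite -KP_St_mulP_rng -(nua_mulA (St l)) -a_central a_rng.
by rewrite nua_mulr0 nua_mul0r.
Qed.

Lemma central_annihilated_saturated : row_finite G ->
  saturated (fun u => nua_mul a (P u) = 0).
Proof.
move=> rf u a_src.
have [k0 | k_gt0] := posnP k.
  rewrite -[u]src_idm; apply: a_src; rewrite ?rng_idm // deg_idm.
  by apply/ffunP=> -[i]; rewrite k0.
have [s sP ->] := KP_P_sum_ones k_gt0 rf u.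
rewrite nua_mulr_sumr; apply: big1_seq => l /andP[_ /sP[r_l d_l]].
rewrite nua_mulA a_central -KP_S_mulP_src -(nua_mulA (S l)) -a_central a_src //.
by rewrite nua_mulr0 nua_mul0r.
Qed.

End Central.
End KPFamily.

Theorem lemma4p4 (k : nat) (G : kgraph k) (R : comPzRingType)
    (A : nualg R) (p : Obj G -> A) (s st : Mor G -> A) :
  row_finite G -> cofinal G -> no_sources G ->
  is_KP_algebra p s st ->
  forall a : A, a <> 0 ->
  (forall b : A, nua_mul a b = nua_mul b a) ->
  forall (m : deg_t k) (F : seq (Mor G * Mor G)) (rc : Mor G * Mor G -> R),
  normal_form s st a m F rc ->
  forall v : Obj G, exists2 ab, ab \in F & v = rng ab.2.
Proof.
move=> rf cof _ [famP _ _] a a_neq0 a_central m F rc [_ _ def_a] v.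
apply: NNPP => v_not_rng.
have a_v : nua_mul a (p v) = 0.
  rewrite def_a KP_normal_form_mulP_eq0 // => ab ab_F.
  by apply/eqP=> v_rng; apply: v_not_rng; exists ab.
have a_all w := cofinal_hereditary_saturated cof
  (central_annihilated_hereditary famP a_central)
  (central_annihilated_saturated famP a_central rf) w a_v.
pose W := undup [seq rng ab.2 | ab <- F].
have a_W : nua_mul a (\sum_(w <- W) p w) = a.
  by rewrite {1}def_a KP_normal_form_mul_sumP ?undup_uniq // => w; rewrite mem_undup.
apply: a_neq0; rewrite -a_W nua_mulr_sumr.
by apply: big1 => w _; apply: a_all.
Qed.
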